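(* Fix integers $N\ge 2$ and $K\ge 1$. There exists a Boolean tensor $\mathcal{B}\in\{0,1\}^{N\times N\times K}$ such that no ranking tensor in $\pi(\mathcal{M}^{\text{TransE}})$ is consistent with $\mathcal{B}$.
   Context: A score-based model assigns a score $s_k(i,j)\in\mathbb{R}$ to each triple, $i,j\in\{1,\dots,N\}$, $k\in\{1,\dots,K\}$; its scoring tensor has frontal slices $\mathbf{S}_k$ with $[\mathbf{S}_k]_{ij}=s_k(i,j)$. For a real $N\times N$ matrix $\mathbf{S}$, $\pi(\mathbf{S})$ is the matrix of dense ranks: $\pi_{ij}(\mathbf{S})=1+$ (number of distinct values among entries of $\mathbf{S}$ strictly larger than $s_{ij}$). For tensors, $\pi$ acts slicewise; for a set $X$, $\pi(X)=\{\pi(x):x\in X\}$. TransE of size $r$: parameters $\mathbf{A}\in\mathbb{R}^{N\times r}$ (rows $\mathbf{a}_i$), $\mathbf{R}\in\mathbb{R}^{K\times r}$ (rows $\mathbf{r}_k$), score $-\|\mathbf{a}_i+\mathbf{r}_k-\mathbf{a}_j\|_2^2$; $\mathcal{M}^{\text{TransE}}$ is the set of scoring tensors of all TransE models of all sizes $r\in\mathbb{N}^+$. A ranking tensor $\mathcal{P}$ is consistent with a Boolean tensor $\mathcal{B}$ if for every $k$ and all $i,j,i',j'$: $b_{ijk}=1$ and $b_{i'j'k}=0$ imply $p_{ijk}<p_{i'j'k}$. *)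

From HB Require Import structures.
From mathcomp Require Import all_boot all_order all_algebra.
From mathcomp Require Import reals.
Set Implicit Arguments. Unset Strict Implicit. Unset Printing Implicit Defensive.
Import Order.TTheory GRing.Theory Num.Theory.
Local Open Scope ring_scope.

Definition dense_rank (R : realType) (N : nat) (S : 'I_N -> 'I_N -> R)
    (i j : 'I_N) : nat :=
  (size (undup [seq S x.1 x.2 | x <- enum [pred x : 'I_N * 'I_N | S i j < S x.1 x.2]])).+1.

Definition pi_tensor (R : realType) (N K : nat) (T : 'I_N -> 'I_N -> 'I_K -> R)
    : 'I_N -> 'I_N -> 'I_K -> nat :=
  fun i j k => dense_rank (fun i' j' => T i' j' k) i j.

Definition transE_score (R : realType) (N K r : nat)
    (A : 'M[R]_(N, r)) (Rel : 'M[R]_(K, r)) : 'I_N -> 'I_N -> 'I_K -> R :=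
  fun i j k => - \sum_(l < r) (A i l + Rel k l - A j l) ^+ 2.

Definition in_pi_TransE (R : realType) (N K : nat) (P : 'I_N -> 'I_N -> 'I_K -> nat) : Prop :=
  exists r : nat, (0 < r)%N /\
    exists (A : 'M[R]_(N, r)) (Rel : 'M[R]_(K, r)),
      forall i j k, P i j k = pi_tensor (transE_score A Rel) i j k.

Definition consistent (N K : nat) (P : 'I_N -> 'I_N -> 'I_K -> nat)
    (B : 'I_N -> 'I_N -> 'I_K -> bool) : Prop :=
  forall (k : 'I_K) (i j i' j' : 'I_N),
    B i j k = true -> B i' j' k = false -> (P i j k < P i' j' k)%N.

From mathcomp Require Import all_boot all_order all_algebra.
From mathcomp Require Import reals.
Set Implicit Arguments. Unset Strict Implicit. Unset Printing Implicit Defensive.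
Import GRing.Theory.
Local Open Scope ring_scope.

(* A TransE model scores every reflexive triple (i, i, k) by -||r_k||^2,
   whatever the entity i, so all reflexive triples of a relation share one
   dense rank.  A Boolean tensor declaring (i0, i0, k) true and (i1, i1, k)
   false for i1 <> i0 demands a strictly smaller rank for one of them, which
   no TransE ranking can provide. *)

Lemma dense_rank_eq (R : realType) (N : nat) (S : 'I_N -> 'I_N -> R)
    (i j i' j' : 'I_N) :
  S i j = S i' j' -> dense_rank S i j = dense_rank S i' j'.
Proof. by rewrite /dense_rank => ->. Qed.

Lemma transE_score_diag (R : realType) (N K r : nat)
    (A : 'M[R]_(N, r)) (Rel : 'M[R]_(K, r)) (i : 'I_N) (k : 'I_K) :
  transE_score A Rel i i k = - \sum_(l < r) Rel k l ^+ 2.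
Proof.
rewrite /transE_score; congr (- _); apply: eq_bigr => l _.
by rewrite addrAC subrr add0r.
Qed.

Lemma pi_TransE_diag (R : realType) (N K : nat) (P : 'I_N -> 'I_N -> 'I_K -> nat) :
  in_pi_TransE R P -> forall (i j : 'I_N) (k : 'I_K), P i i k = P j j k.
Proof.
move=> [r [_ [A [Rel P_score]]]] i j k.
by rewrite !P_score; apply: dense_rank_eq; rewrite !transE_score_diag.
Qed.

Definition diag_indicator (N K : nat) (i0 : 'I_N) : 'I_N -> 'I_N -> 'I_K -> bool :=
  fun i j _ => (i == i0) && (j == i0).

Lemma diag_constant_not_consistent (N K : nat) (P : 'I_N -> 'I_N -> 'I_K -> nat)
    (i0 i1 : 'I_N) (k : 'I_K) :
  i1 != i0 -> (forall i j k, P i i k = P j j k) ->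
  ~ consistent P (diag_indicator i0).
Proof.
move=> i1_neq_i0 P_diag P_cons.
have := P_cons k i0 i0 i1 i1; rewrite /diag_indicator eqxx (negbTE i1_neq_i0).
by rewrite (P_diag i0 i1) ltnn => /(_ erefl erefl).
Qed.

Theorem theorem10 (R : realType) (N K : nat) :
  (2 <= N)%N -> (1 <= K)%N ->
  exists B : 'I_N -> 'I_N -> 'I_K -> bool,
    forall P : 'I_N -> 'I_N -> 'I_K -> nat,
      in_pi_TransE R P -> ~ consistent P B.
Proof.
move=> N_ge2 K_ge1.
pose i0 : 'I_N := Ordinal (ltnW N_ge2).
pose i1 : 'I_N := Ordinal N_ge2.
exists (diag_indicator i0) => P P_TransE.
have i1_neq_i0 : i1 != i0 by rewrite -val_eqE.
exact: (diag_constant_not_consistent (Ordinal K_ge1) i1_neq_i0 (pi_TransE_diag P_TransE)).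
Qed.
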